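(* There is no connected mutation-finite graph with at least $8$ vertices that contains a subgraph isomorphic to $\mathbf{X}_7$.
   Context: A graph here is a finite directed multigraph with no loops and no oriented $2$-cycles; multiple arrows in the same direction are allowed. The mutation $\mu_k\Gamma$ at a vertex $k$: for every pair of arrows $i\to k$, $k\to j$ add an arrow $i\to j$; reverse all arrows incident to $k$; then delete pairs of opposite arrows $i\to j$, $j\to i$ until no oriented $2$-cycles remain. $\Gamma$ is mutation-finite if only finitely many isomorphism classes of graphs are obtainable from it by sequences of mutations. Connected means the underlying undirected graph is connected. Subgraph always means full (induced) subgraph. $\mathbf{X}_7$: vertices $x,y_i,z_i$ ($i=1,2,3$); for each $i=1,2,3$: two arrows $y_i\to z_i$, one arrow $z_i\to x$, one arrow $x\to y_i$ (no other arrows). *)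

From mathcomp Require Import all_boot all_fingroup.
Set Implicit Arguments. Unset Strict Implicit. Unset Printing Implicit Defensive.

(* A graph on vertex set V is given by its arrow-count function:
   arr i j = number of arrows i -> j. *)
Definition quiver (V : finType) := V -> V -> nat.

Definition valid_quiver (V : finType) (a : quiver V) : Prop :=
  (forall i, a i i = 0) /\ (forall i j, a i j = 0 \/ a j i = 0).

(* Mutation at k: for i, j <> k, add a i k * a k j arrows i -> j (and
   symmetrically a j k * a k i arrows j -> i), then cancel opposite pairs;
   arrows incident to k are reversed. *)
Definition mutate (V : finType) (k : V) (a : quiver V) : quiver V :=
  fun i j =>
    if (i == k) || (j == k) then a j i
    else (a i j + a i k * a k j) - (a j i + a j k * a k i).

Definition mutseq (V : finType) (ks : seq V) (a : quiver V) : quiver V :=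
  foldl (fun b k => mutate k b) a ks.

Definition quiver_iso (V : finType) (a b : quiver V) : Prop :=
  exists s : {perm V}, forall i j, b (s i) (s j) = a i j.

Definition mutation_finite (V : finType) (a : quiver V) : Prop :=
  exists (N : nat) (L : 'I_N -> quiver V),
    forall ks : seq V, exists m : 'I_N, quiver_iso (mutseq ks a) (L m).

Definition quiver_connected (V : finType) (a : quiver V) : Prop :=
  forall i j : V, connect (fun x y => (0 < a x y) || (0 < a y x)) i j.

(* X_7: vertex 0 = x, vertices 1,2,3 = y_1,y_2,y_3, vertices 4,5,6 = z_1,z_2,z_3 *)
Definition X7 : quiver 'I_7 :=
  fun i j =>
    let i' := nat_of_ord i in let j' := nat_of_ord j in
    if (1 <= i' <= 3) && (j' == i' + 3) then 2
    else if (4 <= i' <= 6) && (j' == 0) then 1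
    else if (i' == 0) && (1 <= j' <= 3) then 1
    else 0.

Definition has_induced_subgraph (V W : finType) (a : quiver V) (b : quiver W) : Prop :=
  exists f : W -> V, injective f /\ forall i j, a (f i) (f j) = b i j.

(* A mutation-finite quiver has bounded arrow multiplicities along all mutation
   sequences.  Mutations at the vertices of a triangle act on its 3x3 exchange
   submatrix by rank-3 matrix mutation, and once a triangle has two edges and an
   edge of multiplicity at least 3, mutating at one or two of its vertices
   strictly increases the total multiplicity while preserving that shape; so no
   such triangle is ever reached.  By connectedness some vertex v outside a copy
   of X7 is joined to it.  If v is joined to a vertex of X7 by at least 3 arrows,
   v, that vertex and one of its neighbours in X7 form such a triangle;
   otherwise each of the 5^7 possible ways of attaching v reaches such a
   triangle within six mutations at the eight vertices, as checked by
   computation. *)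

From mathcomp Require Import all_boot all_fingroup zify.
From Stdlib Require Import BinInt Lia.

Set Implicit Arguments. Unset Strict Implicit. Unset Printing Implicit Defensive.

Section RankThreeMutation.

Local Open Scope Z_scope.

(* [mut_corr x y = sgn x * [x y]_+], the correction in the matrix mutation
   rule [b'_ij = b_ij + sgn(b_ik) [b_ik b_kj]_+]. *)
Definition mut_corr (x y : Z) : Z :=
  Z.max x 0 * Z.max y 0 - Z.max (- x) 0 * Z.max (- y) 0.

Lemma mut_corr_cases x y :
  [\/ [/\ 0 <= x, 0 <= y & mut_corr x y = x * y],
      [/\ x <= 0, y <= 0 & mut_corr x y = - (x * y)],
      [/\ 0 <= x, y <= 0 & mut_corr x y = 0]
    | [/\ x <= 0, 0 <= y & mut_corr x y = 0]].
Proof.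
  rewrite /mut_corr.
  have [hx|hx] := Z.le_ge_cases 0 x; have [hy|hy] := Z.le_ge_cases 0 y;
    [apply: Or41 | apply: Or43 | apply: Or44 | apply: Or42]; split=> //; nia.
Qed.

Ltac free_of_mut_corr t :=
  match t with context [mut_corr _ _] => fail 1 | _ => idtac end.

Ltac case_mut_corr :=
  repeat match goal with
  | |- context [mut_corr ?x ?y] =>
      free_of_mut_corr x; free_of_mut_corr y;
      have [[? ? ->]|[? ? ->]|[? ? ->]|[? ? ->]] := mut_corr_cases x y
  end.

(* A triple [(p, q, r)] stands for the exchange matrix of a triangle [u, w, t]
   with [p = b_uw], [q = b_ut] and [r = b_wt]; [mutate3 0], [mutate3 1] and
   [mutate3 2] mutate at [u], [w] and [t]. *)
Definition triple := (Z * Z * Z)%type.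

Definition mutate3 (c : nat) (s : triple) : triple :=
  let: (p, q, r) := s in
  match c with
  | 0%nat => (- p, - q, r + mut_corr (- p) q)
  | 1%nat => (- p, q + mut_corr p r, - r)
  | _ => (p + mut_corr q (- r), - q, - r)
  end.

Definition mutseq3 (cs : seq nat) (s : triple) : triple :=
  foldl (fun s c => mutate3 c s) s cs.

Definition big_triple (s : triple) : Prop :=
  let: (p, q, r) := s in
  (3 <= Z.abs p \/ 3 <= Z.abs q \/ 3 <= Z.abs r) /\
  ((p <> 0 /\ q <> 0) \/ (p <> 0 /\ r <> 0) \/ (q <> 0 /\ r <> 0)).

Definition triple_norm (s : triple) : Z :=
  let: (p, q, r) := s in Z.abs p + Z.abs q + Z.abs r.

Ltac split_sign x :=
  let h := fresh "h" in have [h|[h|h]] := Z.lt_trichotomy x 0;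
  [ rewrite -> (Z.abs_neq x) in * by lia | subst x | rewrite -> (Z.abs_eq x) in * by lia ].

Lemma big_triple_grows s : big_triple s ->
  exists cs, big_triple (mutseq3 cs s) /\ triple_norm s < triple_norm (mutseq3 cs s).
Proof.
  case: s => [[p q] r] /= Hs.
  rewrite /big_triple /triple_norm /=.
  have [Hpq|Hpq] := Z.le_ge_cases (Z.abs p) (Z.abs q);
  have [Hpr|Hpr] := Z.le_ge_cases (Z.abs p) (Z.abs r);
  have [Hqr|Hqr] := Z.le_ge_cases (Z.abs q) (Z.abs r);
  split_sign p; split_sign q; split_sign r; try (exfalso; lia);
  let grow cs := exists cs; rewrite /=; case_mut_corr; (split; [split|]); first [lia | nia] in
  first [ grow [:: 0%nat] | grow [:: 1%nat] | grow [:: 2%nat] | grow [:: 1%nat; 0%nat]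
        | grow [:: 0%nat; 1%nat] | grow [:: 0%nat; 2%nat] ].
Qed.

Lemma mutseq3_cat cs1 cs2 s : mutseq3 (cs1 ++ cs2) s = mutseq3 cs2 (mutseq3 cs1 s).
Proof. exact: foldl_cat. Qed.

Lemma big_triple_unbounded s : big_triple s ->
  forall N : nat, exists cs, big_triple (mutseq3 cs s) /\ Z.of_nat N <= triple_norm (mutseq3 cs s).
Proof.
  move=> s_big; elim=> [|N [cs [big_cs le_cs]]].
  - exists [::]; split=> //; case: s s_big => [[p q] r] /= _; lia.
  - have [cs' [big_cs' lt_cs']] := big_triple_grows big_cs.
    by exists (cs ++ cs'); rewrite mutseq3_cat; split=> //; lia.
Qed.

End RankThreeMutation.

Section ExchangeMatrix.

Variable V : finType.

Definition exchange (a : quiver V) (i j : V) : Z := (Z.of_nat (a i j) - Z.of_nat (a j i))%Z.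

Lemma exchange_skew (a : quiver V) i j : exchange a j i = (- exchange a i j)%Z.
Proof. rewrite /exchange; lia. Qed.

Lemma valid_mutate (k : V) (a : quiver V) : valid_quiver a -> valid_quiver (mutate k a).
Proof.
  move=> [a_irr a_2cyc]; split=> [i | i j]; rewrite /mutate.
  - by case: ifP => _; [exact: a_irr | lia].
  - rewrite [(j == k) || _]orbC; case: ifP => _; last lia.
    by case: (a_2cyc j i); [left | right].
Qed.

Lemma valid_mutseq ks (a : quiver V) : valid_quiver a -> valid_quiver (mutseq ks a).
Proof. by elim: ks a => //= k ks IH a /(valid_mutate k)/IH. Qed.

Lemma mutseq_cat ks1 ks2 (a : quiver V) :
  mutseq (ks1 ++ ks2) a = mutseq ks2 (mutseq ks1 a).
Proof. exact: foldl_cat. Qed.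

Lemma exchange_mutate (k : V) (a : quiver V) i j : valid_quiver a ->
  exchange (mutate k a) i j =
  if (i == k) || (j == k) then (- exchange a i j)%Z
  else (exchange a i j + mut_corr (exchange a i k) (exchange a k j))%Z.
Proof.
  move=> [_ a_2cyc]; rewrite /exchange /mutate [(j == k) || _]orbC.
  case: ifP => _; first lia.
  have := a_2cyc i k; have := a_2cyc j k; rewrite /mut_corr; nia.
Qed.

Definition triangle (u w t : V) (a : quiver V) : triple :=
  (exchange a u w, exchange a u t, exchange a w t).

Definition corner (u w t : V) (c : nat) : V :=
  match c with 0 => u | 1 => w | _ => t end.

Lemma triangle_mutseq (u w t : V) : [&& u != w, u != t & w != t] ->
  forall cs (a : quiver V), valid_quiver a ->
  triangle u w t (mutseq (map (corner u w t) cs) a) = mutseq3 cs (triangle u w t a).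
Proof.
  case/and3P=> uw ut wt; elim=> [|c cs IH] a a_valid //=.
  rewrite IH; last exact: valid_mutate.
  have [wu tu tw] : [/\ w == u = false, t == u = false & t == w = false].
    by split; apply: negbTE; rewrite eq_sym.
  by case: c => [|[|c]]; rewrite /triangle /= !exchange_mutate // ?eqxx
     ?(negbTE uw) ?(negbTE ut) ?(negbTE wt) ?wu ?tu ?tw ?orbT ?orbF
     ?(exchange_skew a w u) ?(exchange_skew a t w) ?Z.opp_involutive.
Qed.

Lemma mutation_finite_bounded (a : quiver V) : mutation_finite a ->
  exists B, forall ks i j, mutseq ks a i j <= B.
Proof.
  case=> N [L L_classes].
  exists (\max_(m < N) \max_(x : V) \max_(y : V) L m x y) => ks i j.
  have [m [s iso]] := L_classes ks; rewrite -iso.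
  apply: leq_trans (leq_bigmax m); apply: leq_trans (leq_bigmax (s i)).
  exact: (leq_bigmax (s j)).
Qed.

Definition reaches_big_triangle (a : quiver V) : Prop :=
  exists ks (u w t : V),
    [&& u != w, u != t & w != t] /\ big_triple (triangle u w t (mutseq ks a)).

Lemma mutation_finite_no_big_triangle (a : quiver V) :
  mutation_finite a -> valid_quiver a -> ~ reaches_big_triangle a.
Proof.
  move=> /mutation_finite_bounded [B a_bounded] a_valid [ks [u [w [t [uwt]]]]].
  move=> /big_triple_unbounded.
  case/(_ (3 * B).+1) => cs [_]; rewrite -triangle_mutseq //; last exact: valid_mutseq.
  rewrite -mutseq_cat.
  have b_bounded := a_bounded (ks ++ map (corner u w t) cs).
  have := b_bounded u w; have := b_bounded w u; have := b_bounded u t.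
  have := b_bounded t u; have := b_bounded w t; have := b_bounded t w.
  rewrite /triangle /exchange /=; lia.
Qed.

End ExchangeMatrix.

(* Variants of [has] and [all] that short-circuit under the call-by-value
   strategy of [vm_compute]. *)
Fixpoint has_lazy T (p : T -> bool) (s : seq T) : bool :=
  if s is x :: s' then (if p x then true else has_lazy p s') else false.

Fixpoint all_lazy T (p : T -> bool) (s : seq T) : bool :=
  if s is x :: s' then (if p x then all_lazy p s' else false) else true.

Lemma has_lazyE T (p : T -> bool) s : has_lazy p s = has p s.
Proof. by elim: s => //= x s ->; case: (p x). Qed.

Lemma all_lazyE T (p : T -> bool) s : all_lazy p s = all p s.
Proof. by elim: s => //= x s ->; case: (p x). Qed.

Fixpoint has_lazy_nth T (x0 : T) (p : nat -> T -> bool) (js : seq nat) (r : seq T) : bool :=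
  if js is j :: js' then (if p j (head x0 r) then true else has_lazy_nth x0 p js' (behead r))
  else false.

Lemma has_lazy_nthP T (x0 : T) p m r :
  has_lazy_nth x0 p (iota 0 m) r -> exists2 j, j < m & p j (nth x0 r j).
Proof.
  suff gen j0 : has_lazy_nth x0 p (iota j0 m) r -> exists2 j, j < m & p (j0 + j) (nth x0 r j).
    by case/gen => j; exists j.
  elim: m j0 r => [|m IH] j0 r //=.
  case: ifP => [pj _ | _ /IH [j lt_jm pj]]; first by exists 0; rewrite ?addn0 ?nth0.
  by exists j.+1; rewrite // -addSnnS -nth_behead.
Qed.

Section ListMatrices.

Local Open Scope Z_scope.

(* Exchange matrices of size [n] as lists of rows; entries beyond the lists read as [0]. *)
Definition mx_entry (M : seq (seq Z)) (i j : nat) : Z := nth 0 (nth [::] M i) j.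

Fixpoint mx_mutate_row (i k : nat) (b_ik : Z) (js : seq nat) (ri rk : seq Z) : seq Z :=
  if js is j :: js' then
    (if (i == k) || (j == k) then - head 0 ri else head 0 ri + mut_corr b_ik (head 0 rk))
      :: mx_mutate_row i k b_ik js' (behead ri) (behead rk)
  else [::].

Fixpoint mx_mutate_rows (n k : nat) (rk : seq Z) (ixs : seq nat) (M : seq (seq Z)) :=
  if ixs is i :: ixs' then
    (let ri := head [::] M in mx_mutate_row i k (nth 0 ri k) (iota 0 n) ri rk)
      :: mx_mutate_rows n k rk ixs' (behead M)
  else [::].

Definition mx_mutate (n k : nat) (M : seq (seq Z)) : seq (seq Z) :=
  mx_mutate_rows n k (nth [::] M k) (iota 0 n) M.

Definition mx_mutseq (n : nat) (ks : seq nat) (M : seq (seq Z)) : seq (seq Z) :=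
  foldl (fun M k => mx_mutate n k M) M ks.

Lemma nth_mx_mutate_row i k b s m ri rk j : (j < m)%nat ->
  nth 0 (mx_mutate_row i k b (iota s m) ri rk) j =
  if (i == k) || ((s + j)%nat == k) then - nth 0 ri j else nth 0 ri j + mut_corr b (nth 0 rk j).
Proof.
  elim: m s ri rk j => [|m IH] s ri rk [|j] //= lt_jm; first by rewrite addn0 !nth0.
  by rewrite IH // addSnnS !nth_behead.
Qed.

Lemma nth_mx_mutate_rows n k rk s m M i : (i < m)%nat ->
  nth [::] (mx_mutate_rows n k rk (iota s m) M) i =
  mx_mutate_row (s + i)%nat k (nth 0 (nth [::] M i) k) (iota 0 n) (nth [::] M i) rk.
Proof.
  elim: m s M i => [|m IH] s M [|i] //= lt_im; first by rewrite addn0 nth0.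
  by rewrite IH // addSnnS !nth_behead.
Qed.

Lemma mx_entry_mutate (n k : nat) M (i j : nat) : (i < n)%nat -> (j < n)%nat ->
  mx_entry (mx_mutate n k M) i j =
  if (i == k) || (j == k) then - mx_entry M i j
  else mx_entry M i j + mut_corr (mx_entry M i k) (mx_entry M k j).
Proof. by move=> lt_in lt_jn; rewrite /mx_entry nth_mx_mutate_rows // nth_mx_mutate_row. Qed.

Definition mx_has_big_triangle (n : nat) (M : seq (seq Z)) : bool :=
  has_lazy_nth [::] (fun i ri => has_lazy_nth 0 (fun j b_ij =>
    if i == j then false
    else if 3 <=? Z.abs b_ij then
      has_lazy (fun k => if (k == i) || (k == j) then false
                         else ~~ (mx_entry M i k =? 0) || ~~ (mx_entry M j k =? 0)) (iota 0 n)
    else false) (iota 0 n) ri) (iota 0 n) M.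

Lemma mx_has_big_triangleP n M : mx_has_big_triangle n M ->
  exists i j k : 'I_n, [&& i != j, i != k & j != k] /\
    big_triple (mx_entry M i j, mx_entry M i k, mx_entry M j k).
Proof.
  move=> big; have [i lt_in row_big] := has_lazy_nthP big.
  have [j lt_jn] := has_lazy_nthP row_big.
  case: (i =P j) => // ne_ij; case: ifP => // /Z.leb_le big_ij.
  rewrite has_lazyE => /hasP [k]; rewrite mem_iota /= add0n => lt_kn.
  case: ifP => // /norP [ne_ki ne_kj] nz_k.
  exists (Ordinal lt_in), (Ordinal lt_jn), (Ordinal lt_kn); split.
    by rewrite -!val_eqE; apply/and3P; split; [apply/eqP | rewrite eq_sym..].
  have nz_ij : nth 0 (nth [::] M i) j <> 0 by lia.
  rewrite /= /mx_entry; split; first by left.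
  by case/orP: nz_k => /negP nz_k; [left | right; left]; split=> // /Z.eqb_eq.
Qed.

Fixpoint mx_certifies (n : nat) (ks : seq nat) (M : seq (seq Z)) : bool :=
  if mx_has_big_triangle n M then true
  else if ks is k :: ks' then mx_certifies n ks' (mx_mutate n k M) else false.

Lemma mx_certifiesP n ks M : all (fun k => k < n)%nat ks -> mx_certifies n ks M ->
  exists ks' : seq 'I_n, mx_has_big_triangle n (mx_mutseq n (map val ks') M).
Proof.
  elim: ks M => [|k ks IH] M /=; first by case: ifP => // big _ _; exists [::].
  case/andP=> lt_kn /IH{}IH; case: ifP => [big _ | _ /IH [ks' big]]; first by exists [::].
  by exists (Ordinal lt_kn :: ks').
Qed.

End ListMatrices.

Section Realization.

Variables (V : finType) (n : nat) (g : 'I_n -> V).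
Hypothesis g_inj : injective g.

Definition mx_realizes (M : seq (seq Z)) (a : quiver V) : Prop :=
  forall x y : 'I_n, mx_entry M x y = exchange a (g x) (g y).

Lemma mx_realizes_mutseq (ks : seq 'I_n) M (a : quiver V) :
  valid_quiver a -> mx_realizes M a ->
  mx_realizes (mx_mutseq n (map val ks) M) (mutseq (map g ks) a).
Proof.
  elim: ks M a => [|k ks IH] M a a_valid M_a //=.
  apply: IH; first exact: valid_mutate.
  move=> x y; rewrite mx_entry_mutate // exchange_mutate // !(inj_eq g_inj) -!M_a.
  by rewrite -!val_eqE.
Qed.

Lemma mx_certifies_big_triangle ks M (a : quiver V) :
  valid_quiver a -> mx_realizes M a ->
  all (fun k => k < n) ks -> mx_certifies n ks M -> reaches_big_triangle a.
Proof.
  move=> a_valid M_a ks_n /(mx_certifiesP ks_n) [ks' /mx_has_big_triangleP [i [j [k [ijk big]]]]].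
  exists (map g ks'), (g i), (g j), (g k); split; first by rewrite !(inj_eq g_inj).
  by rewrite /triangle -!(mx_realizes_mutseq ks' a_valid M_a).
Qed.

End Realization.

Lemma connect_exit (T : finType) (e : rel T) (A : seq T) x y :
  connect e x y -> x \in A -> y \notin A ->
  exists x' y', [/\ x' \in A, y' \notin A & e x' y'].
Proof.
  case/connectP=> p + ->; elim: p x => [|z p IH] x /= e_xp x_in y_out.
    by rewrite x_in in y_out.
  case/andP: e_xp => e_xz e_zp; have [z_in | z_out] := boolP (z \in A).
    exact: IH z_in y_out.
  by exists x, z.
Qed.

Lemma connected_attached_vertex n m (a : quiver 'I_n) (f : 'I_m.+1 -> 'I_n) :
  m.+1 < n -> injective f -> quiver_connected a ->
  exists v c, v \notin codom f /\ (0 < a v (f c)) || (0 < a (f c) v).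
Proof.
  move=> lt_mn f_inj a_conn.
  have [v0 v0_out] : exists v0, v0 \notin codom f.
    case: (pickP [predC codom f]) => [v0 v0_out | all_in]; first by exists v0.
    have : #|'I_n| <= #|codom f|.
      by apply/subset_leq_card/subsetP => v _; apply/negbFE/all_in.
    by rewrite card_codom // !card_ord leqNgt lt_mn.
  have [x [v [x_in v_out xv]]] := connect_exit (a_conn (f ord0) v0) (codom_f f ord0) v0_out.
  by case/codomP: x_in => c ->{x} in xv *; exists v, c; rewrite orbC.
Qed.

Section Extension.

Variables (n m : nat) (f : 'I_m -> 'I_n) (v : 'I_n).

Definition extend (x : 'I_m.+1) : 'I_n := if unlift ord_max x is Some y then f y else v.

Lemma extend_inj : injective f -> v \notin codom f -> injective extend.
Proof.
  move=> f_inj v_out x y; rewrite /extend.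
  case: (unliftP ord_max x) => [x' ->|->]; case: (unliftP ord_max y) => [y' ->|->] //.
  - by move/f_inj ->.
  - by move=> fx; move: v_out; rewrite -fx codom_f.
  - by move=> fy; move: v_out; rewrite fy codom_f.
Qed.

Definition attachment (a : quiver 'I_n) : seq (nat * nat) :=
  [seq (a v (f c), a (f c) v) | c <- enum 'I_m].

Definition ext_arrows (b : quiver 'I_m) (d : seq (nat * nat)) : quiver 'I_m.+1 :=
  fun x y =>
    match unlift ord_max x, unlift ord_max y with
    | Some i, Some j => b i j
    | None, Some j => (nth (0, 0) d j).1
    | Some i, None => (nth (0, 0) d i).2
    | None, None => 0
    end.

Lemma extend_induced (a : quiver 'I_n) (b : quiver 'I_m) :
  valid_quiver a -> (forall i j, a (f i) (f j) = b i j) ->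
  forall x y, a (extend x) (extend y) = ext_arrows b (attachment a) x y.
Proof.
  move=> [a_irr _] f_b x y; rewrite /extend /ext_arrows.
  have nth_att (c : 'I_m) : nth (0, 0) (attachment a) c = (a v (f c), a (f c) v).
    by rewrite (nth_map c) ?size_enum_ord ?nth_ord_enum.
  by case: (unlift ord_max x) => [i|]; case: (unlift ord_max y) => [j|]; rewrite ?nth_att.
Qed.

End Extension.

(* Rows and columns in the order x, y_1, y_2, y_3, z_1, z_2, z_3. *)
Definition X7_matrix : seq (seq Z) :=
  [:: [:: 0;  1;  1;  1; -1; -1; -1];
      [:: -1; 0;  0;  0;  2;  0;  0];
      [:: -1; 0;  0;  0;  0;  2;  0];
      [:: -1; 0;  0;  0;  0;  0;  2];
      [:: 1; -2;  0;  0;  0;  0;  0];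
      [:: 1;  0; -2;  0;  0;  0;  0];
      [:: 1;  0;  0; -2;  0;  0;  0]]%Z.

Definition ext_matrix (d : seq (nat * nat)) : seq (seq Z) :=
  [seq rcons rb.1 (Z.of_nat rb.2.2 - Z.of_nat rb.2.1)%Z | rb <- zip X7_matrix d] ++
  [:: rcons [seq (Z.of_nat p.1 - Z.of_nat p.2)%Z | p <- d] 0%Z].

Lemma ext_matrix_entry d : size d = 7 ->
  forall x y : 'I_8, mx_entry (ext_matrix d) x y = exchange (ext_arrows X7 d) x y.
Proof.
  case: d => [|p0 [|p1 [|p2 [|p3 [|p4 [|p5 [|p6 [|]]]]]]]] //= _ x y.
  rewrite /exchange /ext_arrows.
  case: (unliftP ord_max x) => [i ->|->]; case: (unliftP ord_max y) => [j ->|->];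
  rewrite ?liftK ?unlift_none ?lift_max;
  do ?[case: i => [[|[|[|[|[|[|[|?]]]]]]] ?] //]; do ?[case: j => [[|[|[|[|[|[|[|?]]]]]]] ?] //];
  vm_compute; reflexivity.
Qed.

Definition small_pairs : seq (nat * nat) := [:: (0, 0); (1, 0); (2, 0); (0, 1); (0, 2)].

Fixpoint attachments (k : nat) : seq (seq (nat * nat)) :=
  if k is k'.+1 then [seq p :: d | p <- small_pairs, d <- attachments k'] else [:: [::]].

Lemma mem_attachments d : all (mem small_pairs) d -> d \in attachments (size d).
Proof.
  elim: d => [|p d IH] //= /andP [p_small /IH d_in].
  exact: (allpairs_f (fun p d => p :: d) p_small d_in).
Qed.

(* Vertex 7 is the attached vertex. *)
Definition X7_certificates : seq (seq nat) :=
  [:: [:: 0; 2; 5; 3; 4; 3]; [:: 0; 1; 4; 2; 6; 2]; [:: 3; 6; 3]; [:: 5; 2; 5];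
      [:: 2; 5; 2]; [:: 1; 4; 1]; [:: 4; 1; 4]; [:: 0; 1; 4; 3; 5; 3]].

(* The empty attachment needs no certificate: it is excluded by connectedness. *)
Definition certified_attachment (d : seq (nat * nat)) : bool :=
  if all_lazy (fun p => p == (0, 0)) d then true
  else has_lazy (fun ks => mx_certifies 8 ks (ext_matrix d)) X7_certificates.

Lemma attachments_certified : all_lazy certified_attachment (attachments 7).
Proof. vm_compute; reflexivity. Qed.

Lemma X7_neighbour (c : 'I_7) : exists c', (0 < X7 c c') || (0 < X7 c' c).
Proof.
  exists (if c == ord0 then Ordinal (isT : 1 < 7) else ord0).
  by case: c => [[|[|[|[|[|[|[|?]]]]]]] ?].
Qed.

Section AttachedVertex.

Variables (n : nat) (a : quiver 'I_n) (f : 'I_7 -> 'I_n) (v : 'I_n).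
Hypotheses (a_valid : valid_quiver a) (f_inj : injective f)
  (f_X7 : forall i j, a (f i) (f j) = X7 i j) (v_out : v \notin codom f).

Lemma heavy_attachment_big_triangle c :
  (2 < a v (f c)) || (2 < a (f c) v) -> reaches_big_triangle a.
Proof.
  move=> heavy; have [c' cc'] := X7_neighbour c.
  have [_ a_2cyc] := a_valid.
  have ne_v (i : 'I_7) : v != f i by apply: contraNneq v_out => ->; apply: codom_f.
  have ne_cc' : f c != f c'.
    by apply: contraTneq cc' => /f_inj <-; rewrite -f_X7 (proj1 a_valid).
  exists [::], v, (f c), (f c'); rewrite /= !ne_v ne_cc'; split=> //.
  move: (a_2cyc v (f c)) (a_2cyc (f c) (f c')) heavy cc'.
  rewrite /triangle /big_triple /exchange !f_X7; lia.
Qed.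

Lemma light_attachment_big_triangle c :
  (0 < a v (f c)) || (0 < a (f c) v) ->
  (forall c, (a v (f c) <= 2) && (a (f c) v <= 2)) -> reaches_big_triangle a.
Proof.
  move=> attached light; set d := attachment f v a.
  have d_small : all (mem small_pairs) d.
    apply/allP => _ /mapP [c' _ ->]; have [_ a_2cyc] := a_valid.
    move: (light c') (a_2cyc v (f c')); move: (a v _) (a _ v) => p q /andP [p_le2 q_le2].
    by case=> [-> | ->]; [case: q q_le2 => [|[|[|?]]] | case: p p_le2 => [|[|[|?]]]].
  have size_d : size d = 7 by rewrite size_map size_enum_ord.
  have := mem_attachments d_small; rewrite size_d => d_in.
  have := attachments_certified; rewrite all_lazyE => /allP /(_ d d_in).
  rewrite /certified_attachment all_lazyE.
  have -> : all (fun p => p == (0, 0)) d = false.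
    apply/negbTE/allPn; exists (a v (f c), a (f c) v); first by rewrite map_f ?mem_enum.
    by rewrite xpair_eqE negb_and -!lt0n.
  rewrite has_lazyE => /hasP [ks ks_cert certified].
  apply: (mx_certifies_big_triangle (g := extend f v)) certified.
  - exact: extend_inj.
  - exact: a_valid.
  - move=> x y; rewrite ext_matrix_entry //.
    by rewrite /exchange !(extend_induced _ a_valid f_X7).
  - by move: ks ks_cert; apply/allP.
Qed.

End AttachedVertex.

Theorem theorem10 (n : nat) (a : quiver 'I_n) :
  8 <= n -> valid_quiver a -> quiver_connected a ->
  has_induced_subgraph a X7 -> ~ mutation_finite a.
Proof.
  move=> n_ge8 a_valid a_conn [f [f_inj f_X7]] a_mf.
  have [v [c [v_out attached]]] := connected_attached_vertex n_ge8 f_inj a_conn.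
  apply: (mutation_finite_no_big_triangle a_mf a_valid).
  case: (pickP (fun c' => (2 < a v (f c')) || (2 < a (f c') v))) => [c' heavy | light].
  - exact: heavy_attachment_big_triangle a_valid f_inj f_X7 v_out _ heavy.
  - apply: light_attachment_big_triangle a_valid f_inj f_X7 v_out _ attached _ => c'.
    by move: (light c') => /= /negbT; rewrite negb_or -!leqNgt.
Qed.
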